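(* Let $r(t)\in\mathbb{Z}[t]$. The following are equivalent: (i) $\operatorname{Cong}(r(t)) = 0$; (ii) $r(0)=0$, or there exist $u\in\mathbb{N}$ and $s(t)\in\mathbb{Z}[t]\setminus\mathbb{Z}$ such that $s(t^{u+1})$ divides $r(t)$ in $\mathbb{Z}[t]$.
   Context: $\mathbb{N}=\{1,2,\dots\}$. For $r(t)=\sum_i a_it^i$ and integers $u>j\ge0$, $r_{u,j}(t):=\sum_{i\equiv j\bmod u}a_it^i$. $\operatorname{Cong}(r(t))$ is the non-negative generator of the ideal $\mathbb{Z}\cap\bigcap_{1<u\le\deg(r(t))+1}\big(r_{u,0}(t)\mathbb{Z}[t]+\cdots+r_{u,u-1}(t)\mathbb{Z}[t]\big)$ of $\mathbb{Z}$. *)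

From HB Require Import structures.
From mathcomp Require Import all_boot all_order all_algebra.
From Stdlib Require Import ClassicalEpsilon.
Set Implicit Arguments. Unset Strict Implicit. Unset Printing Implicit Defensive.
Import Order.TTheory GRing.Theory Num.Theory.
Local Open Scope ring_scope.

Definition rpart (r : {poly int}) (u j : nat) : {poly int} :=
  \poly_(i < size r) (if (i %% u)%N == j then r`_i else 0).

Definition in_part_ideal (r : {poly int}) (u : nat) (m : int) : Prop :=
  exists q : 'I_u -> {poly int}, m%:P = \sum_(j < u) rpart r u j * q j.

(* m lies in Z ∩ ⋂_{1 < u <= deg r + 1} (...);  deg r + 1 = size r *)
Definition in_cong_ideal (r : {poly int}) (m : int) : Prop :=
  forall u : nat, (1 < u)%N -> (u <= size r)%N -> in_part_ideal r u m.

Definition is_cong_gen (r : {poly int}) (n : nat) : Prop :=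
  forall m : int, in_cong_ideal r m <-> (n%:Z %| m)%Z.

Definition Cong (r : {poly int}) : nat :=
  epsilon (inhabits 0%N) (is_cong_gen r).

Definition zdvdp (a b : {poly int}) : Prop := exists q : {poly int}, b = a * q.

From HB Require Import structures.
From mathcomp Require Import all_boot all_order all_algebra.
From Stdlib Require Import ClassicalEpsilon.
Import Order.TTheory GRing.Theory Num.Theory.
Set Implicit Arguments. Unset Strict Implicit. Unset Printing Implicit Defensive.
Local Open Scope ring_scope.

(* If r(0) = 0, every r_{u,j} vanishes at 0; if s(t^u) divides r, it divides
   every r_{u,j}.  Either way the ideal for that u contains no nonzero integer.
   Conversely, write r_{u,j} = t^j g_j(t^u).  Over Q the g_j either have a
   nonconstant common factor, which by Gauss's lemma yields an integral s with
   s(t^u) | r, or they generate the unit ideal.  Substituting t^u then puts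
   t^(u-1) in the Q-ideal of the r_{u,j}; that ideal also contains r_{u,0},
   which is coprime to t^(u-1) since r(0) <> 0, so it is the unit ideal.
   Clearing denominators gives a nonzero integer in each ideal, and the
   product of these over 1 < u <= deg r + 1 lies in their intersection. *)

Local Notation pZtoQ := (map_poly (intr : int -> rat)).

Lemma int_ideal_principal (I : int -> Prop) :
  I 0 -> (forall a b, I a -> I b -> I (a - b)) ->
  (forall a b, I a -> I (a * b)) ->
  exists n : nat, forall m, I m <-> (n%:Z %| m)%Z.
Proof.
move=> I0 IB IM.
have [[m [m0 Im]]|I_triv] := classic (exists m, m != 0 /\ I m); last first.
  exists 0%N => m; rewrite dvd0z; split=> [Im|/eqP-> //].
  by case: eqP => // /eqP m0; case: I_triv; exists m.
have Iabs : I `|m|%N.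
  have [/gez0_abs->//|/ltz0_abs->] := lerP 0 m.
  by rewrite -mulrN1; apply: IM.
pose P n := excluded_middle_informative ((0 < n)%N /\ I n) : bool.
have /ex_minnP[n /sumboolP[n_gt0 In] n_min] : exists n, P n.
  by exists `|m|%N; apply/sumboolP; rewrite absz_gt0.
exists n => k; split=> [Ik|/dvdzP[q ->]]; last by rewrite mulrC; apply: IM.
have n_neq0 : n%:Z != 0 by rewrite eqz_nat -lt0n.
have Imod : I (k %% n)%Z.
  by rewrite /modz; apply: IB => //; rewrite mulrC; apply: IM.
have /eqP mod0 : (k %% n)%Z == 0.
  move: (modz_ge0 k n_neq0) (ltz_mod k n_neq0) Imod.
  case: (k %% n)%Z => [[|x]|x] // _ lt_x_n Ix.
  have := n_min x.+1 (introT (sumboolP _) (conj isT Ix)).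
  by rewrite leqNgt -ltz_nat lt_x_n.
by apply/dvdzP; exists (k %/ n)%Z; rewrite {1}(divz_eq k n) mod0 addr0.
Qed.

Section PartIdeal.
Variable r : {poly int}.

Lemma in_part_ideal0 u : in_part_ideal r u 0.
Proof. by exists (fun _ => 0); rewrite big1 // => j _; rewrite mulr0. Qed.

Lemma in_part_idealB u a b :
  in_part_ideal r u a -> in_part_ideal r u b -> in_part_ideal r u (a - b).
Proof.
move=> [qa Ha] [qb Hb]; exists (fun j => qa j - qb j).
by rewrite polyCB Ha Hb -sumrB; apply: eq_bigr => j _; rewrite mulrBr.
Qed.

Lemma in_part_idealMr u a b : in_part_ideal r u a -> in_part_ideal r u (a * b).
Proof.
move=> [q Ha]; exists (fun j => q j * b%:P).
by rewrite polyCM Ha mulr_suml; apply: eq_bigr => j _; rewrite mulrA.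
Qed.

Lemma Cong_spec : is_cong_gen r (Cong r).
Proof.
apply: epsilon_spec; apply: int_ideal_principal.
- by move=> u _ _; apply: in_part_ideal0.
- move=> a b Ia Ib u u_gt1 u_le.
  by apply: in_part_idealB; [apply: Ia | apply: Ib].
- by move=> a b Ia u u_gt1 u_le; apply: in_part_idealMr; apply: Ia.
Qed.

Lemma Cong_eq0 : Cong r = 0%N <-> forall m, in_cong_ideal r m -> m = 0.
Proof.
split=> [C0 m /Cong_spec|triv]; first by rewrite C0 dvd0z => /eqP.
by apply/eqP; rewrite -eqz_nat; apply/eqP/triv/Cong_spec.
Qed.

End PartIdeal.

Lemma coef_rpart (r : {poly int}) u j i :
  (rpart r u j)`_i = if (i %% u == j)%N then r`_i else 0.
Proof.
by rewrite coef_poly; case: ltnP => // /(nth_default 0) ->; rewrite if_same.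
Qed.

Lemma rpart_sum (r : {poly int}) u : (0 < u)%N -> r = \sum_(j < u) rpart r u j.
Proof.
move=> u_gt0; apply/polyP => i; rewrite coef_sum.
rewrite (bigD1 (Ordinal (ltn_pmod i u_gt0))) //= coef_rpart eqxx big1 ?addr0 //.
move=> j /eqP j_neq; rewrite coef_rpart; case: eqP => // i_mod.
by case: j_neq; apply: val_inj.
Qed.

Lemma rpart_comp_XnM (s q : {poly int}) u j : (0 < u)%N ->
  rpart ((s \Po 'X^u) * q) u j = (s \Po 'X^u) * rpart q u j.
Proof.
move=> u_gt0; apply/polyP => i; rewrite coef_rpart !coefM.
have mod_sub (k : 'I_i.+1) : (u %| k)%N -> ((i - k) %% u = i %% u)%N.
  move: (leq_ord k) => /subnK; move: (k : nat) => {}k k_le /dvdnP[c k_eq].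
  by rewrite -{2}k_le k_eq addnC modnMDl.
have [i_mod|i_mod] := eqVneq (i %% u)%N j; last first.
  apply/esym/big1 => k _; rewrite coef_rpart coef_comp_poly_Xn //.
  case: (boolP (u %| k)%N) => [/mod_sub->|]; last by rewrite mul0r.
  by rewrite (negPf i_mod) mulr0.
apply: eq_bigr => k _; rewrite coef_rpart coef_comp_poly_Xn //.
by case: (boolP (u %| k)%N) => [/mod_sub->|]; rewrite ?i_mod ?eqxx ?mul0r.
Qed.

Definition polyphase (r : {poly int}) (u j : nat) : {poly int} :=
  \poly_(k < size r) r`_(k * u + j).

Lemma rpart_polyphase (r : {poly int}) u j : (j < u)%N ->
  rpart r u j = 'X^j * (polyphase r u j \Po 'X^u).
Proof.
move=> j_lt_u; have u_gt0 : (0 < u)%N by apply: leq_ltn_trans j_lt_u.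
apply/polyP => i; rewrite coef_rpart coefXnM coef_comp_poly_Xn // coef_poly.
have [i_mod|i_mod] := eqVneq (i %% u)%N j.
  have i_eq : i = (i %/ u * u + j)%N by rewrite {1}(divn_eq i u) i_mod.
  have j_le_i : (j <= i)%N by rewrite i_eq leq_addl.
  have i_sub : (i - j = i %/ u * u)%N by rewrite {1}i_eq addnK.
  rewrite ltnNge j_le_i /= i_sub dvdn_mull // mulnK // -i_eq.
  by case: ltnP => // /leq_trans/(_ (leq_div i u)) /(nth_default 0).
case: ltnP => // j_le_i; case: dvdnP => // -[c i_eq].
by case/eqP: i_mod; rewrite -(subnK j_le_i) i_eq modnMDl modn_small.
Qed.

Lemma size_comp_Xn_gt (R : idomainType) (s : {poly R}) u :
  (0 < u)%N -> (1 < size s)%N -> (u < size (s \Po 'X^u))%N.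
Proof.
move=> u_gt0 s_gt1; have := size_comp_poly s 'X^u; rewrite size_polyXn /=.
case: (size (s \Po 'X^u)) => [|n] /= size_eq.
  move/eqP: size_eq; rewrite eq_sym muln_eq0 (eqn0Ngt u) u_gt0 orbF.
  by rewrite -subn1 subn_eq0 leqNgt s_gt1.
by rewrite ltnS size_eq leq_pmull // -subn1 subn_gt0.
Qed.

Lemma part_ideal_root0 (r : {poly int}) u m :
  r.[0] = 0 -> in_part_ideal r u m -> m = 0.
Proof.
move=> r0 [q m_eq]; have := congr1 (horner^~ 0) m_eq.
rewrite hornerC horner_sum => ->; apply: big1 => j _.
by rewrite hornerM horner_coef0 coef_rpart -horner_coef0 r0 if_same mul0r.
Qed.

Lemma part_ideal_comp_Xn_dvd (r s : {poly int}) u m :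
  (1 < u)%N -> (1 < size s)%N -> zdvdp (s \Po 'X^u) r ->
  in_part_ideal r u m -> m = 0.
Proof.
move=> u_gt1 s_gt1 [q ->] [p m_eq]; apply/eqP/negPn/negP => m_neq0.
have : (s \Po 'X^u) %| m%:P.
  rewrite m_eq; under eq_bigr do rewrite rpart_comp_XnM ?(ltnW u_gt1) // -mulrA.
  by rewrite -mulr_sumr dvdp_mulIl.
move=> /dvdp_leq; rewrite polyC_eq0 size_polyC m_neq0 => /(_ isT).
by rewrite leqNgt (ltn_trans u_gt1 (size_comp_Xn_gt (ltnW u_gt1) s_gt1)).
Qed.

Lemma size_gt_of_comp_Xn_dvd (r s : {poly int}) u :
  r != 0 -> (0 < u)%N -> (1 < size s)%N -> zdvdp (s \Po 'X^u) r ->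
  (u < size r)%N.
Proof.
move=> r_neq0 u_gt0 s_gt1 [q r_eq].
apply: leq_trans (size_comp_Xn_gt u_gt0 s_gt1) _.
by apply: dvdp_leq r_neq0 _; rewrite r_eq dvdp_mulIl.
Qed.

Definition in_poly_ideal (R : nzRingType) n (G : nat -> {poly R}) p :=
  exists a : nat -> {poly R}, p = \sum_(i < n) a i * G i.

Section FieldPolyIdeal.
Variable F : fieldType.
Implicit Types (G : nat -> {poly F}) (p : {poly F}).

Lemma common_divisor_in_ideal n G :
  exists2 d, in_poly_ideal n G d & forall i, (i < n)%N -> d %| G i.
Proof.
elim: n => [|n [d [a d_eq] d_dvd]].
  by exists 0 => //; exists (fun _ => 0); rewrite big_ord0.
have [[u v] /= uv_eqp] := Bezoutp d (G n).
exists (u * d + v * G n).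
  exists (fun i => if (i < n)%N then u * a i else v).
  rewrite big_ord_recr /= ltnn d_eq mulr_sumr; congr (_ + _).
  by apply: eq_bigr => i _; rewrite ltn_ord mulrA.
move=> i; rewrite (eqp_dvdl _ uv_eqp) ltnS leq_eqVlt => /orP[/eqP->|i_lt_n].
  exact: dvdp_gcdr.
exact: dvdp_trans (dvdp_gcdl _ _) (d_dvd i i_lt_n).
Qed.

Lemma ideal_one_or_common_divisor n G :
  in_poly_ideal n G 1 \/
  exists2 d : {poly F}, (1 < size d)%N & forall i, (i < n)%N -> d %| G i.
Proof.
have [d [a d_eq] d_dvd] := common_divisor_in_ideal n G.
have [d_gt1|] := ltnP 1 (size d); first by right; exists d.
rewrite leq_eqVlt ltnS leqn0 size_poly_eq0.
case/orP=> [/size_poly1P[c c_neq0 d_c]|/eqP d0].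
  left; exists (fun i => c^-1%:P * a i).
  rewrite -[1]polyC1 -(mulVf c_neq0) polyCM -d_c d_eq mulr_sumr.
  by apply: eq_bigr => i _; rewrite mulrA.
right; exists 'X => [|i /d_dvd]; first by rewrite size_polyX.
by rewrite d0 dvd0p => /eqP->; rewrite dvdp0.
Qed.

Lemma ideal_one_of_coprime n G p : (0 < n)%N ->
  in_poly_ideal n G p -> coprimep p (G 0%N) -> in_poly_ideal n G 1.
Proof.
move=> n_gt0 [a p_eq] /Bezout_eq1_coprimepP[[u v] /= uv_eq1].
exists (fun i => u * a i + (if i == 0%N then v else 0)).
rewrite -uv_eq1 p_eq mulr_sumr.
under [RHS]eq_bigr do rewrite mulrDl.
rewrite big_split /=; congr (_ + _).
  by apply: eq_bigr => i _; rewrite mulrA.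
rewrite (bigD1 (Ordinal n_gt0)) //= big1 ?addr0 // => i /eqP i_neq0.
by case: eqP => [i0|]; [case: i_neq0; apply: val_inj | rewrite mul0r].
Qed.

End FieldPolyIdeal.

Lemma int_ideal_of_rat_ideal n (P : nat -> {poly int}) :
  in_poly_ideal n (fun i => pZtoQ (P i)) 1 ->
  exists2 N : int, N != 0 & in_poly_ideal n P N%:P.
Proof.
move=> [b one_eq].
pose q i := projT1 (rat_poly_scale (b i)).
pose den i := s2val (projT2 (rat_poly_scale (b i))).
have den_neq0 i : den i != 0 by rewrite /den; case: (projT2 _).
have b_eq i : b i = (den i)%:~R^-1 *: pZtoQ (q i).
  by rewrite /den /q; case: (rat_poly_scale (b i)) => p [a /= _ ->].
exists (\prod_(i < n) den i); first by apply/prodf_neq0 => i _.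
exists (fun j => (\prod_(i < n | i != j :> nat) den i) *: q j).
apply: (@map_inj_poly _ _ (intr : int -> rat)); [exact: intr_inj|exact: rmorph0|].
rewrite map_polyC /= -[_%:P]mulr1 mul_polyC one_eq scaler_sumr rmorph_sum /=.
apply: eq_bigr => j _; rewrite rmorphM /= scalerAl; congr (_ * _).
rewrite b_eq scalerA map_polyZ /=; congr (_ *: _).
rewrite (bigD1 j) //= rmorphM /= mulrAC divff ?intr_eq0 // mul1r.
by congr intr; apply: eq_bigl => i.
Qed.

Lemma common_int_divisor_of_rat n (g : nat -> {poly int}) (d : {poly rat}) :
  (1 < size d)%N -> (forall i, (i < n)%N -> d %| pZtoQ (g i)) ->
  exists2 s : {poly int}, (1 < size s)%N & forall i, (i < n)%N -> zdvdp s (g i).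
Proof.
move=> d_gt1 d_dvd; have [p [a a_neq0 d_eq]] := rat_poly_scale d.
have a_inv_neq0 : (a%:~R : rat)^-1 != 0 by rewrite invr_eq0 intr_eq0.
exists (zprimitive p).
  rewrite size_zprimitive -size_rat_int_poly.
  by rewrite -(size_scale _ a_inv_neq0) -d_eq.
move=> i /d_dvd; rewrite d_eq dvdpZl // dvdp_rat_int => /dvdpP_int[q ->].
by exists q.
Qed.

Lemma comp_Xn_dvd_of_polyphase (r s : {poly int}) u : (0 < u)%N ->
  (forall j, (j < u)%N -> zdvdp s (polyphase r u j)) -> zdvdp (s \Po 'X^u) r.
Proof.
move=> u_gt0 s_dvd; rewrite (rpart_sum r u_gt0).
apply: big_ind => [|p1 p2 [q1 ->] [q2 ->]|j _].
- by exists 0; rewrite mulr0.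
- by exists (q1 + q2); rewrite mulrDr.
- rewrite rpart_polyphase //; have [q ->] := s_dvd j (ltn_ord j).
  by exists ('X^j * (q \Po 'X^u)); rewrite comp_polyM mulrCA.
Qed.

Lemma ideal_one_of_polyphase (r : {poly int}) u : r.[0] != 0 -> (0 < u)%N ->
  in_poly_ideal u (fun j => pZtoQ (polyphase r u j)) 1 ->
  in_poly_ideal u (fun j => pZtoQ (rpart r u j)) 1.
Proof.
move=> r0 u_gt0 [a one_eq].
have rpartQ (j : 'I_u) :
    pZtoQ (rpart r u j) = 'X^j * (pZtoQ (polyphase r u j) \Po 'X^u).
  by rewrite rpart_polyphase // rmorphM /= map_polyXn map_comp_poly map_polyXn.
apply: (@ideal_one_of_coprime _ _ _ 'X^(u.-1) u_gt0).
  exists (fun j => (a j \Po 'X^u) * 'X^(u.-1 - j)).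
  rewrite -[LHS]mulr1 -polyC1 -(comp_polyC 1 'X^u) polyC1 one_eq.
  rewrite rmorph_sum mulr_sumr; apply: eq_bigr => j _.
  have j_le : (j <= u.-1)%N by rewrite -ltnS prednK.
  by rewrite rmorphM /= rpartQ mulrCA -{1}(subnK j_le) exprD !mulrA.
apply: coprimep_expl; rewrite coprimep_sym coprimepX /root horner_coef0.
by rewrite coef_map /= coef_rpart mod0n eqxx intr_eq0 -horner_coef0.
Qed.

Lemma part_ideal_neq0_or_comp_Xn_dvd (r : {poly int}) u :
  r.[0] != 0 -> (0 < u)%N ->
  (exists2 m, m != 0 & in_part_ideal r u m) \/
  exists2 s : {poly int}, (1 < size s)%N & zdvdp (s \Po 'X^u) r.
Proof.
move=> r0 u_gt0.
have [one|[d d_gt1 d_dvd]] :=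
  ideal_one_or_common_divisor u (fun j => pZtoQ (polyphase r u j)).
  left; have [N N_neq0 [a N_eq]] :=
    int_ideal_of_rat_ideal (ideal_one_of_polyphase r0 u_gt0 one).
  exists N => //; exists (fun j => a j).
  by rewrite N_eq; apply: eq_bigr => j _; rewrite mulrC.
right; have [s s_gt1 s_dvd] := common_int_divisor_of_rat d_gt1 d_dvd.
by exists s => //; apply: comp_Xn_dvd_of_polyphase.
Qed.

Lemma cong_ideal_neq0 (r : {poly int}) :
  (forall u, (1 < u)%N -> (u <= size r)%N ->
     exists2 m, m != 0 & in_part_ideal r u m) ->
  exists2 m, m != 0 & in_cong_ideal r m.
Proof.
move=> part_neq0.
suff /(_ (size r) (leqnn _)) [m m_neq0 m_in] : forall n, (n <= size r)%N ->
  exists2 m, m != 0 & forall u, (1 < u)%N -> (u <= n)%N -> in_part_ideal r u m.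
  by exists m.
elim=> [_|n IH n_lt]; first by exists 1 => // -[|[|u]].
have [m m_neq0 m_in] := IH (ltnW n_lt).
have [n1_gt1|n1_le1] := ltnP 1 n.+1; last first.
  exists m => // u u_gt1 u_le.
  by have := leq_trans u_le n1_le1; rewrite leqNgt u_gt1.
have [m' m'_neq0 m'_in] := part_neq0 _ n1_gt1 n_lt.
exists (m * m'); first by rewrite mulf_neq0.
move=> u u_gt1; rewrite leq_eqVlt ltnS => /orP[/eqP->|u_le_n].
  by rewrite mulrC; apply: in_part_idealMr.
by apply/in_part_idealMr/m_in.
Qed.

Unset Implicit Arguments.

Theorem proposition3p4 (r : {poly int}) (hr : r != 0) :
  Cong r = 0%N <->
  (r.[0] = 0 \/
   exists (u : nat) (s : {poly int}),
     (0 < u)%N /\ (1 < size s)%N /\ zdvdp (s \Po 'X^(u.+1)) r).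
Proof.
split=> [C0|[r0|[u [s [u_gt0 [s_gt1 s_dvd]]]]]]; last first.
- have u_lt := size_gt_of_comp_Xn_dvd hr (ltn0Sn u) s_gt1 s_dvd.
  apply/Cong_eq0 => m /(_ u.+1 u_gt0 (ltnW u_lt)).
  exact: (part_ideal_comp_Xn_dvd (u := u.+1) u_gt0 s_gt1 s_dvd).
- have r_gt1 : (1 < size r)%N.
    rewrite ltnNge; apply: contra hr => /size1_polyC r_eq.
    by rewrite r_eq -horner_coef0 r0 polyC0.
  by apply/Cong_eq0 => m /(_ 2%N isT r_gt1); apply: part_ideal_root0.
have [r0|r0] := eqVneq r.[0] 0; [by left | right].
apply: NNPP => no_dvd.
have [m m_neq0 m_in] : exists2 m, m != 0 & in_cong_ideal r m.
  apply: cong_ideal_neq0 => u u_gt1 _.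
  have [//|[s s_gt1 s_dvd]] := part_ideal_neq0_or_comp_Xn_dvd r0 (ltnW u_gt1).
  by case: no_dvd; exists u.-1, s; rewrite -ltnS prednK // ltnW.
by move/eqP: m_neq0; apply; apply: (proj1 (Cong_eq0 r) C0).
Qed.
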